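(* Let $n$ be a positive integer. For every rational number $x$ with $1/(n+1)<x<1/n$, we have $\mathcal{I}(1/(n+1))<\mathcal{I}(x)<\mathcal{I}(1/n)$.
   Context: For $x\in\mathbb{R}$ let $\{x\}=x-\lfloor x\rfloor$. The interrobang function $\mathcal{I}\colon[0,1]\cap\mathbb{Q}\to\mathbb{R}$ is defined recursively by $\mathcal{I}(0)=0$; $\mathcal{I}(x)=4^{-\lfloor1/x\rfloor}\big(1-2\,\mathcal{I}(\{1/x\})\big)$ if $0<x\le\tfrac12$; and $\mathcal{I}(x)=\tfrac38-\tfrac34\,\mathcal{I}(1/x-1)-\tfrac12\,\mathcal{I}(1-x)$ if $\tfrac12<x\le1$. The recursion is well founded: with the height $a/b\mapsto|a|+|b|$ ($\gcd(a,b)=1$), every argument on the right-hand side has strictly smaller height than $x$, so $\mathcal{I}$ is uniquely defined. *)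

From HB Require Import structures.
From mathcomp Require Import all_boot all_order all_algebra.
Set Implicit Arguments. Unset Strict Implicit. Unset Printing Implicit Defensive.
Import Order.TTheory GRing.Theory Num.Theory.
Local Open Scope ring_scope.

Definition fracq (x : rat) : rat := x - (Num.floor x)%:~R.

Definition heightq (x : rat) : nat := (`|numq x| + `|denq x|)%N.

(* Every
   recursive argument has strictly smaller height, so fuel > height x
   suffices and the value does not depend on the fuel beyond that. *)
Fixpoint interrobang_fuel (k : nat) (x : rat) : rat :=
  match k with
  | O => 0
  | k'.+1 =>
    if x == 0 then 0
    else if x <= 1 / 2 then
      (4%:Q) ^ (- Num.floor (x^-1)) * (1 - 2 * interrobang_fuel k' (fracq (x^-1)))
    else
      3 / 8 - 3 / 4 * interrobang_fuel k' (x^-1 - 1)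
            - 1 / 2 * interrobang_fuel k' (1 - x)
  end.

(* The interrobang function I : [0,1] ∩ Q -> Q (values outside [0,1] are
   irrelevant junk). *)
Definition interrobang (x : rat) : rat := interrobang_fuel (heightq x).+1 x.

(** Both endpoints are explicit: [I(1/m) = 4^-m] for [m >= 2] and [I(1) = 3/8].
    By induction on the fuel, [I] maps [[0,1]] into [[0,3/8]] and [[0,1/2]]
    into [[0,1/16]], is positive on [(0,1]] and stays below [3/8] on [(0,1)].
    For [1/(n+1) < x < 1/n] with [n >= 2] one has [floor(1/x) = n] and
    [{1/x} ∈ (0,1)], so [I x = 4^-n (1 - 2 I{1/x})] lies strictly between
    [4^-(n+1)] and [4^-n].  For [n = 1], [I x = 3/8 - 3/4 I(1/x - 1) - 1/2 I(1-x)]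
    with [1/x - 1 ∈ (0,1)] and [1 - x ∈ (0,1/2)], which lies strictly between
    [3/8 - 3/4 * 3/8 - 1/2 * 1/16 = 1/16] and [3/8]. *)
From Pilot Require Import Defs.
From mathcomp Require Import all_boot all_order all_algebra.
From mathcomp Require Import lra.
Import Order.TTheory GRing.Theory Num.Theory.
Set Implicit Arguments.
Unset Strict Implicit.
Local Open Scope ring_scope.

Lemma expr4N_bounds (m : int) : 2 <= m -> 0 < 4%:Q ^ (- m) <= 1 / 16.
Proof.
case: m => // p; rewrite lez_nat => p_ge2; rewrite -exprnN.
have pow_ge16 : 16 <= 4%:Q ^+ p.
  rewrite -(subnKC p_ge2) exprD.
  have : 1 <= 4%:Q ^+ (p - 2) by apply: exprn_ege1.
  have -> : 4%:Q ^+ 2 = 16 by [].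
  lra.
rewrite invr_gt0 (lt_le_trans _ pow_ge16) //= div1r.
by rewrite lef_pV2 ?posrE // (lt_le_trans _ pow_ge16).
Qed.

Lemma fracq_ge0 (t : rat) : 0 <= Defs.fracq t.
Proof. by rewrite /Defs.fracq subr_ge0 Num.Theory.floor_le. Qed.

Lemma fracq_lt1 (t : rat) : Defs.fracq t < 1.
Proof. by rewrite /Defs.fracq ltrBlDl -[1 in X in _ < X]/(1%:~R) -intrD floorD1_gt. Qed.

Lemma fracq_gt0 (t : rat) (m : int) : m%:~R < t < (m + 1)%:~R -> 0 < Defs.fracq t.
Proof.
move=> /andP[lt_mt lt_tm1]; have /eqP floor_t : Num.floor t == m.
  by rewrite floor_eq ltW.
by rewrite subr_gt0 floor_t.
Qed.

Lemma floor_invr_ge2 (y : rat) : 0 < y -> y <= 1 / 2 -> 2 <= Num.floor y^-1.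
Proof.
move=> y_gt0 y_le; rewrite floor_ge_int.
by rewrite -[2%:~R]/(2 : rat) -[2]invrK lef_pV2 ?posrE ?invr_gt0 // -div1r.
Qed.

Lemma invr_sub1_ge0 (y : rat) : 0 < y -> y <= 1 -> 0 <= y^-1 - 1.
Proof. by move=> y_gt0 y_le1; rewrite subr_ge0 invf_ge1. Qed.

Lemma invr_sub1_gt0 (y : rat) : 0 < y -> y < 1 -> 0 < y^-1 - 1.
Proof. by move=> y_gt0 y_lt1; rewrite subr_gt0 invf_gt1. Qed.

Lemma invr_sub1_lt1 (y : rat) : 1 / 2 < y -> y^-1 - 1 < 1.
Proof.
move=> y_gt; have y_gt0 : 0 < y by apply: lt_trans y_gt.
by rewrite ltrBlDr -[1 + 1]invrK ltf_pV2 ?posrE ?invr_gt0 // -div1r.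
Qed.

Lemma heightq_ge2 (x : rat) : x != 0 -> (2 <= heightq x)%N.
Proof.
move=> x_neq0; rewrite /heightq -[2%N]/(1 + 1)%N.
by rewrite leq_add // absz_gt0 ?numq_eq0 ?denq_neq0.
Qed.

Section Fuel.

Local Notation I := interrobang_fuel.

Lemma interrobang_fuel0 y : I 0 y = 0.
Proof. by []. Qed.

Lemma interrobang_fuel_at0 k : I k 0 = 0.
Proof. by case: k. Qed.

Lemma interrobang_fuel_small k y : 0 < y -> y <= 1 / 2 ->
  I k.+1 y = 4%:Q ^ (- Num.floor y^-1) * (1 - 2 * I k (Defs.fracq y^-1)).
Proof. by move=> y_gt0 y_le /=; rewrite gt_eqF // y_le. Qed.

Lemma interrobang_fuel_large k y : 1 / 2 < y ->
  I k.+1 y = 3 / 8 - 3 / 4 * I k (y^-1 - 1) - 1 / 2 * I k (1 - y).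
Proof.
move=> y_gt /=; rewrite gt_eqF ?(lt_trans _ y_gt) //.
by rewrite leNgt y_gt.
Qed.

Lemma interrobang_fuel_bounds k y : 0 <= y -> y <= 1 ->
  [/\ 0 <= I k y, I k y <= 3 / 8 & (y <= 1 / 2 -> I k y <= 1 / 16)].
Proof.
elim: k y => [|k IH] y y_ge0 y_le1.
  by rewrite interrobang_fuel0; split=> [||_]; lra.
have [->|y_neq0] := eqVneq y 0.
  by rewrite interrobang_fuel_at0; split=> [||_]; lra.
have y_gt0 : 0 < y by rewrite lt_neqAle eq_sym y_neq0.
have [y_le_half|y_gt_half] := leP y (1 / 2).
  rewrite (interrobang_fuel_small _ y_gt0 y_le_half).
  have /andP[P_gt0 P_le] := expr4N_bounds (floor_invr_ge2 y_gt0 y_le_half).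
  have [J_ge0 J_le _] := IH _ (fracq_ge0 y^-1) (ltW (fracq_lt1 y^-1)).
  set P := 4%:Q ^ _ in P_gt0 P_le *; set J := I k _ in J_ge0 J_le *.
  have value_ge0 : 0 <= P * (1 - 2 * J) by apply: mulr_ge0; [exact: ltW | lra].
  have value_le : P * (1 - 2 * J) <= P by apply: ler_piMr; [exact: ltW | lra].
  by split=> [||_]; lra.
rewrite (interrobang_fuel_large _ y_gt_half).
have [A_ge0 A_le _] :=
  IH _ (invr_sub1_ge0 y_gt0 y_le1) (ltW (invr_sub1_lt1 y_gt_half)).
have [B_ge0 _ B_le] := IH (1 - y) ltac:(lra) ltac:(lra).
by split=> [||y_le]; lra.
Qed.

Lemma interrobang_fuel_gt0 k y : 0 < y -> y <= 1 -> 0 < I k.+1 y.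
Proof.
move=> y_gt0 y_le1; have [y_le_half|y_gt_half] := leP y (1 / 2).
  rewrite (interrobang_fuel_small _ y_gt0 y_le_half).
  have /andP[P_gt0 _] := expr4N_bounds (floor_invr_ge2 y_gt0 y_le_half).
  have [_ J_le _] :=
    interrobang_fuel_bounds k (fracq_ge0 y^-1) (ltW (fracq_lt1 y^-1)).
  by apply: mulr_gt0; [exact: P_gt0 | lra].
rewrite (interrobang_fuel_large _ y_gt_half).
have [_ A_le _] :=
  interrobang_fuel_bounds k (invr_sub1_ge0 y_gt0 y_le1) (ltW (invr_sub1_lt1 y_gt_half)).
have [_ _ B_le] := interrobang_fuel_bounds k (y := 1 - y) ltac:(lra) ltac:(lra).
have := B_le ltac:(lra); lra.
Qed.

Lemma interrobang_fuel_lt3_8 k y : 0 < y -> y < 1 -> I k.+2 y < 3 / 8.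
Proof.
move=> y_gt0 y_lt1; have [y_le_half|y_gt_half] := leP y (1 / 2).
  have [_ _ /(_ y_le_half)] := interrobang_fuel_bounds k.+2 (ltW y_gt0) (ltW y_lt1).
  lra.
rewrite (interrobang_fuel_large _ y_gt_half).
have A_gt0 :=
  interrobang_fuel_gt0 k (invr_sub1_gt0 y_gt0 y_lt1) (ltW (invr_sub1_lt1 y_gt_half)).
have [B_ge0 _ _] := interrobang_fuel_bounds k.+1 (y := 1 - y) ltac:(lra) ltac:(lra).
lra.
Qed.

Lemma interrobang_fuel_inv_nat k (m : nat) : (2 <= m)%N -> I k.+1 m%:R^-1 = 4%:Q ^- m.
Proof.
move=> m_ge2; have m_gt0 : (0 : rat) < m%:R by rewrite ltr0n (leq_trans _ m_ge2).
have m_le_half : m%:R^-1 <= 1 / 2 :> rat by rewrite div1r lef_pV2 ?posrE ?ler_nat.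
have inv_gt0 : (0 : rat) < m%:R^-1 by rewrite invr_gt0.
rewrite (interrobang_fuel_small _ inv_gt0 m_le_half) invrK.
rewrite /Defs.fracq (intrKfloor (Posz m)) subrr interrobang_fuel_at0.
by rewrite mulr0 subr0 mulr1 exprnN.
Qed.

Lemma interrobang_fuel1 k : I k.+1 1 = 3 / 8.
Proof.
have half_lt1 : 1 / 2 < 1 :> rat by lra.
rewrite (interrobang_fuel_large k half_lt1).
by rewrite invr1 subrr interrobang_fuel_at0 !mulr0 !subr0.
Qed.

Lemma interrobang_fuel_between_inv_nat k (n : nat) x : (2 <= n)%N ->
  n.+1%:R^-1 < x -> x < n%:R^-1 -> 4%:Q ^- n.+1 < I k.+3 x < 4%:Q ^- n.
Proof.
move=> n_ge2 x_gt x_lt.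
have n_gt0 : (0 : rat) < n%:R by rewrite ltr0n (leq_trans _ n_ge2).
have x_gt0 : 0 < x by apply: lt_trans x_gt; rewrite invr_gt0 ltr0n.
have x_le_half : x <= 1 / 2.
  by rewrite (le_trans (ltW x_lt)) // div1r lef_pV2 ?posrE ?ler_nat.
have n_lt_inv : n%:R < x^-1 by rewrite -invf_pgt ?posrE.
have inv_lt : x^-1 < n.+1%:R by rewrite -invf_plt ?posrE ?ltr0n.
have floor_x : Num.floor x^-1 = n.
  by apply/eqP; rewrite floor_eq ltW //= intrD -natrD addn1.
have frac_gt0 : 0 < Defs.fracq x^-1.
  by apply: (fracq_gt0 (m := n)); rewrite n_lt_inv intrD -natrD addn1.
have J_gt0 := interrobang_fuel_gt0 k.+1 frac_gt0 (ltW (fracq_lt1 x^-1)).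
have J_lt := interrobang_fuel_lt3_8 k frac_gt0 (fracq_lt1 x^-1).
rewrite (interrobang_fuel_small _ x_gt0 x_le_half) floor_x -exprnN.
rewrite exprS invfM mulrC; set P := (4%:Q ^+ n)^-1.
have P_gt0 : 0 < P by rewrite invr_gt0 exprn_gt0.
by rewrite ltr_pM2l // gtr_pMr //; apply/andP; split; lra.
Qed.

Lemma interrobang_fuel_between_half_one k x :
  1 / 2 < x -> x < 1 -> 1 / 16 < I k.+3 x < 3 / 8.
Proof.
move=> x_gt x_lt1; have x_gt0 : 0 < x by lra.
rewrite (interrobang_fuel_large _ x_gt).
have A_gt0 :=
  interrobang_fuel_gt0 k.+1 (invr_sub1_gt0 x_gt0 x_lt1) (ltW (invr_sub1_lt1 x_gt)).
have A_lt := interrobang_fuel_lt3_8 k (invr_sub1_gt0 x_gt0 x_lt1) (invr_sub1_lt1 x_gt).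
have [B_ge0 _ B_le] := interrobang_fuel_bounds k.+2 (y := 1 - x) ltac:(lra) ltac:(lra).
have B_le16 := B_le ltac:(lra).
by apply/andP; split; lra.
Qed.

End Fuel.

Lemma interrobang_fuel_height x :
  x != 0 -> exists k, interrobang x = interrobang_fuel k.+3 x.
Proof.
rewrite /interrobang => /heightq_ge2.
by case: (heightq x) => [|[|h]] // _; exists h.
Qed.

Lemma interrobang_inv_nat (m : nat) : (2 <= m)%N -> interrobang m%:R^-1 = 4%:Q ^- m.
Proof. exact: interrobang_fuel_inv_nat. Qed.

Lemma interrobang1 : interrobang 1 = 3 / 8.
Proof. exact: interrobang_fuel1. Qed.

Theorem mainTheorem8 (n : nat) (hn : (0 < n)%N) (x : rat) :
  (n.+1%:R)^-1 < x < (n%:R)^-1 ->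
  interrobang ((n.+1%:R)^-1) < interrobang x < interrobang ((n%:R)^-1).
Proof.
move=> /andP[x_gt x_lt].
have x_neq0 : x != 0 by rewrite gt_eqF // (lt_trans _ x_gt) // invr_gt0 ltr0n.
have [k ->] := interrobang_fuel_height x_neq0.
case: n hn x_gt x_lt => [|[|n]] // _ x_gt x_lt.
  rewrite invr1 interrobang1 interrobang_inv_nat //.
  have -> : 4%:Q ^- 2 = 1 / 16 by rewrite div1r.
  by apply: interrobang_fuel_between_half_one; rewrite ?div1r // -invr1.
by rewrite !interrobang_inv_nat //; apply: interrobang_fuel_between_inv_nat.
Qed.
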